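(* Let $\mathcal{H}$ be a real Hilbert space. For each $i=1,2,\ldots,N$, let $f_i:\mathcal{H}\to\mathcal{H}$ be $\alpha_i$-inverse strongly monotone ($\alpha_i>0$) and let $C_i\subset\mathcal{H}$ be nonempty, closed and convex, with $\bigcap_{i=1}^N C_i\neq\emptyset$. Let $\Psi:=\bigcap_{i=1}^N SOL(C_i,f_i)$ and assume $\Psi\neq\emptyset$. Set $\alpha:=\min_i\alpha_i$ and take $\lambda\in(0,2\alpha)$. Let $T_i:=P_{C_i}(I-\lambda f_i)$, i.e. $T_i(x)=P_{C_i}(x-\lambda f_i(x))$. Given an arbitrary $x^0\in\mathcal{H}$, define $x^{k+1}=(T_1\circ T_2\circ\cdots\circ T_N)(x^k)$ for $k\ge 0$. Then $\{x^k\}_{k=0}^\infty$ converges weakly to a point $x^\ast\in\Psi$, and moreover $x^\ast=\lim_{k\to\infty}P_\Psi(x^k)$ (strong limit).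
   Context: An operator $h:\mathcal{H}\to\mathcal{H}$ is $\beta$-inverse strongly monotone ($\beta>0$) if $\langle h(x)-h(y),x-y\rangle\geq\beta\|h(x)-h(y)\|^2$ for all $x,y\in\mathcal{H}$. For a nonempty closed convex set $D\subset\mathcal{H}$, $P_D$ denotes the metric (nearest point) projection onto $D$. For such $D$ and an operator $h$, $SOL(D,h)$ denotes the set of $x^\ast\in D$ with $\langle h(x^\ast),x-x^\ast\rangle\geq 0$ for all $x\in D$. The set $\Psi$ is closed and convex. *)

From HB Require Import structures.
From mathcomp Require Import all_boot all_order all_algebra.
From mathcomp Require Import all_classical all_reals all_analysis.
Set Implicit Arguments. Unset Strict Implicit. Unset Printing Implicit Defensive.
Import Order.TTheory GRing.Theory Num.Theory.
Local Open Scope classical_set_scope.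
Local Open Scope ring_scope.

(* A real Hilbert space is modelled as a complete normed space V over a
   realType R together with a real inner product ip inducing the norm. *)
Definition inner_product (R : realType) (V : completeNormedModType R)
  (ip : V -> V -> R) : Prop :=
  [/\ forall x y, ip x y = ip y x,
      forall x y z, ip (x + y) z = ip x z + ip y z,
      forall (a : R) x y, ip (a *: x) y = a * ip x y &
      forall x, `|x| ^+ 2 = ip x x].

Definition inverse_strongly_monotone (R : realType) (V : completeNormedModType R)
  (ip : V -> V -> R) (beta : R) (h : V -> V) : Prop :=
  forall x y, beta * `|h x - h y| ^+ 2 <= ip (h x - h y) (x - y).

Definition convex_set_ (R : realType) (V : completeNormedModType R) (D : set V) :=
  forall x y (t : R), D x -> D y -> 0 <= t -> t <= 1 -> D (t *: x + (1 - t) *: y).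

(* metric (nearest point) projection onto D (a nearest point chosen by
   choice; it exists and is unique when D is nonempty closed convex in a
   Hilbert space) *)
Definition metric_proj (R : realType) (V : completeNormedModType R)
  (D : set V) (x : V) : V :=
  xget 0 [set p | D p /\ forall q, D q -> `|x - p| <= `|x - q|].

Definition SOL (R : realType) (V : completeNormedModType R)
  (ip : V -> V -> R) (D : set V) (h : V -> V) : set V :=
  [set xs | D xs /\ forall x, D x -> 0 <= ip (h xs) (x - xs)].

From HB Require Import structures.
From mathcomp Require Import all_boot all_order all_algebra.
From mathcomp Require Import all_classical all_reals all_analysis.
From mathcomp Require Import ring lra.
Import Order.TTheory GRing.Theory Num.Theory.
Set Implicit Arguments. Unset Strict Implicit. Unset Printing Implicit Defensive.
Local Open Scope classical_set_scope.
Local Open Scope ring_scope.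

(* Each [T_i = P_{C_i} (I - lam f_i)] is averaged: firm nonexpansiveness of the
   projection together with the inverse strong monotonicity of [f_i] bounds
   [|(x - T_i x) - (y - T_i y)|^2] by a multiple of [|x - y|^2 - |T_i x - T_i y|^2],
   and the fixed points of [T_i] are exactly [SOL(C_i, f_i)].  Hence the iterates are
   Fejer monotone with respect to [Psi], each [T_i] is asymptotically regular along
   them, and the projections [P_Psi x^k] form a Cauchy sequence with some limit [x*].
   Weak convergence is tested along every ultrafilter refining the cofinite filter:
   there the bounded iterates have a weak limit (Riesz representation of the limit
   functional), which is a common fixed point by demiclosedness and equals [x*] by
   the variational characterisation of [P_Psi]. *)

Lemma cvgnPdist_lt {R : realType} {V : normedModType R} (u : nat -> V) (l : V) :
  u @ \oo --> l <-> forall e, 0 < e -> exists N, forall n, (N <= n)%N -> `|l - u n| < e.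
Proof.
rewrite cvgrPdist_lt; split=> h e /h.
  by move=> [N _ HN]; exists N => n /HN.
by move=> [N HN]; exists N => // n /HN.
Qed.

Lemma cauchyn_cvg_ex {R : realType} {V : completeNormedModType R} (u : nat -> V) :
  (forall e, 0 < e -> exists N, forall m n, (N <= m)%N -> (N <= n)%N -> `|u m - u n| < e) ->
  exists l : V, u @ \oo --> l.
Proof.
move=> h; suff: cvgn u by move=> c; exists (limn u).
apply: cauchy_cvg; apply: cauchy_exP => e /h [N HN].
exists (u N); exists N => // n /= Nn; rewrite -ball_normE /ball_ /=.
exact: HN.
Qed.

Lemma invSn_lt_eventually {R : realType} (e : R) : 0 < e ->
  exists N, forall n, (N <= n)%N -> (n.+1%:R)^-1 < e.
Proof.
move=> e0; exists (Num.truncn (e^-1)) => n hn.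
have h : e^-1 < n.+1%:R.
  by apply: (lt_le_trans (truncnS_gt _)); rewrite ler_nat ltnS.
by rewrite -[e]invrK ltf_pV2 ?posrE ?invr_gt0 ?ltr0Sn.
Qed.

Lemma nonincreasing_ge0_cauchy {R : realType} (d : nat -> R) :
  (forall k, 0 <= d k) -> (forall k, d k.+1 <= d k) ->
  forall e, 0 < e -> exists N, forall k m, (N <= k)%N -> (k <= m)%N -> d k - d m < e.
Proof.
move=> d0 dS.
have dle k m : (k <= m)%N -> d m <= d k.
  move=> /subnK <-; elim: (m - k)%N => [|n IH] //=.
  by rewrite addSn; apply: le_trans IH.
have /(cvgnPdist_lt (V := R^o)) hd : d n @[n --> \oo] --> inf (range d).
  apply: nonincreasing_cvgn; first by move=> n m; apply: dle.
  by exists 0 => _ [n _ <-].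
move=> e e0; have [M HM] := hd (e / 2) ltac:(lra).
exists M => k m hk hkm.
have := HM k hk; have := HM m (leq_trans hk hkm).
have := ler_norm (inf (range d) - d m); have := ler_norm (d k - inf (range d)).
rewrite distrC /=; lra.
Qed.

Lemma cvg_ultra {T : Type} {X : topologicalType} (F : set_system T) {FF : Filter F}
    (a : T -> X) (l : X) :
  (forall U : set_system T, UltraFilter U -> F `<=` U -> a @ U --> l) -> a @ F --> l.
Proof.
move=> hU A /= Al; apply: contrapT; change (~ F (a @^-1` A) -> False) => nFA.
set G := filter_from F (fun B => B `&` ~` (a @^-1` A)).
have GF : ProperFilter G.
  apply: filter_from_proper; last first.
    move=> B FB; apply: contrapT => /set0P/negP; rewrite negbK => /eqP B0.
    apply: nFA; apply: (filterS _ FB) => t Bt; apply: contrapT => nAt.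
    by have : (B `&` ~` (a @^-1` A)) t by []; rewrite B0.
  apply: filter_from_filter; first by exists setT; exact: filterT.
  move=> B C FB FC; exists (B `&` C); first exact: filterI.
  by move=> t [[Bt Ct] nAt].
have [U [UU GU]] := ultraFilterLemma GF.
have FU : F `<=` U by move=> B FB; apply: GU; exists B => // t [].
have UA : U (a @^-1` A) by exact: hU U UU FU A Al.
have UnA : U (~` (a @^-1` A)) by apply: GU; exists setT; [exact: filterT | move=> t []].
by have [t [At nAt]] := filter_ex (filterI UA UnA).
Qed.

Lemma ultra_bounded_cvg {R : realType} {T : Type} (U : set_system T) {UU : UltraFilter U}
    (b : T -> R^o) M :
  (forall t, `|b t| <= M) -> exists l : R^o, b @ U --> l.
Proof.
move=> hb.
have hF : (b @ U) `[- M, M]%classic.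
  apply: (@filterS _ U _ setT); last exact: filterT.
  by move=> t _ /=; rewrite in_itv /= -ler_norml.
have [c [_ cl]] := segment_compact _ hF.
exists c; apply/cvgrPdist_lt => e e0.
have [//|hC] := in_ultra_setVsetC [set t | `|c - b t| < e] UU.
have := cl [set r | ~ `|c - r| < e] (ball (c : R^o) e) hC (@nbhsx_ballx R R^o c e e0).
by move=> [r [/= h1 h2]]; exfalso; apply: h1; move: h2; rewrite -ball_normE.
Qed.

Lemma cvg0_norm_le {R : realType} {V : normedModType R} {T : Type} (F : set_system T)
    {FF : Filter F} (u : T -> V) (g : T -> R^o) :
  (\forall t \near F, `|u t| <= g t) -> g @ F --> 0 -> u @ F --> 0.
Proof.
move=> ug g0; apply: (@norm_cvg0 R V T F FF u).
apply: (@squeeze_cvgr T F FF R (fun=> 0) g (fun t => `|u t|) _ 0 _ g0).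
  by apply: filterS ug => t ->; rewrite normr_ge0.
exact: (@cvg_cst R^o).
Qed.

Lemma cvg_norm_sub0 {R : realType} {V : normedModType R} {T : Type} (F : set_system T)
    {FF : Filter F} (u : T -> V) (a : V) :
  u @ F --> a -> (fun t => `|u t - a| : R^o) @ F --> (0 : R^o).
Proof. by move=> /subr_cvg0 /cvg_norm; rewrite normr0. Qed.

Section InnerProduct.
Context {R : realType} {V : completeNormedModType R} (ip : V -> V -> R).
Hypothesis hip : inner_product ip.

Lemma ipC x y : ip x y = ip y x. Proof. by case: hip. Qed.
Lemma ipDl x y z : ip (x + y) z = ip x z + ip y z. Proof. by case: hip. Qed.
Lemma ipZl a x y : ip (a *: x) y = a * ip x y. Proof. by case: hip. Qed.
Lemma ip_normE x : `|x| ^+ 2 = ip x x. Proof. by case: hip. Qed.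

Lemma ipDr x y z : ip z (x + y) = ip z x + ip z y.
Proof. by rewrite ipC ipDl ipC (ipC y). Qed.
Lemma ipZr a x y : ip y (a *: x) = a * ip y x.
Proof. by rewrite ipC ipZl ipC. Qed.
Lemma ipNl x y : ip (- x) y = - ip x y.
Proof. by rewrite -scaleN1r ipZl mulN1r. Qed.
Lemma ipNr x y : ip y (- x) = - ip y x.
Proof. by rewrite ipC ipNl ipC. Qed.
Lemma ipBl x y z : ip (x - y) z = ip x z - ip y z.
Proof. by rewrite ipDl ipNl. Qed.
Lemma ipBr x y z : ip z (x - y) = ip z x - ip z y.
Proof. by rewrite ipDr ipNr. Qed.
Lemma ip0l x : ip 0 x = 0.
Proof. by rewrite -(scale0r 0) ipZl mul0r. Qed.
Lemma ip0r x : ip x 0 = 0.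
Proof. by rewrite ipC ip0l. Qed.

Definition ipE := (ipDl, ipDr, ipBl, ipBr, ipNl, ipNr, ipZl, ipZr, ip0l, ip0r).

Lemma ip_ge0 x : 0 <= ip x x.
Proof. by rewrite -ip_normE sqr_ge0. Qed.

Lemma ip_eq0 x : ip x x = 0 -> x = 0.
Proof. by rewrite -ip_normE => /eqP; rewrite sqrf_eq0 normr_eq0 => /eqP. Qed.

Lemma ip_subr_eq0 u v : ip (u - v) (u - v) = 0 -> u = v.
Proof. by move=> /ip_eq0 /eqP; rewrite subr_eq0 => /eqP. Qed.

Lemma ip_sqrD u v : ip (u + v) (u + v) = ip u u + 2 * ip u v + ip v v.
Proof. by rewrite ipDl !ipDr (ipC v u); ring. Qed.

Lemma cauchy_schwarz x y : ip x y ^+ 2 <= ip x x * ip y y.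
Proof.
have [y0|yn0] := eqVneq (ip y y) 0.
  by rewrite (ip_eq0 y0) ip0r ip0l expr0n /= mulr0.
have hy : 0 < ip y y by rewrite lt_neqAle eq_sym yn0 ip_ge0.
have := ip_ge0 (x - (ip x y / ip y y) *: y).
rewrite !ipE (ipC y x).
set a := ip x x; set b := ip x y; set c := ip y y => h.
have e : a - b / c * b + (- (b / c * b) - - (b / c * (b / c * c))) = (a * c - b ^+ 2) / c.
  by field.
move: h; rewrite e => h.
by have := mulr_ge0 h (ltW hy); rewrite divfK // subr_ge0.
Qed.

Lemma normr_ip_le x y : `|ip x y| <= `|x| * `|y|.
Proof.
rewrite -(@ler_pXn2r _ 2) ?nnegrE ?mulr_ge0 //.
by rewrite real_normK ?num_real // exprMn !ip_normE cauchy_schwarz.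
Qed.

Lemma ler_norm_ip u v : (`|u| <= `|v|) = (ip u u <= ip v v).
Proof. by rewrite -!ip_normE ler_pXn2r ?nnegrE. Qed.

Lemma ltr_norm_sqr u e : 0 <= e -> (`|u| < e) = (ip u u < e ^+ 2).
Proof. by move=> e0; rewrite -ip_normE ltr_pXn2r ?nnegrE. Qed.

Lemma ler_norm_sqr u e : 0 <= e -> (`|u| <= e) = (ip u u <= e ^+ 2).
Proof. by move=> e0; rewrite -ip_normE ler_pXn2r ?nnegrE. Qed.

Lemma ip_parallelogram_le u v : ip (u + v) (u + v) <= 2 * ip u u + 2 * ip v v.
Proof. have := ip_ge0 (u - v); rewrite !ipE (ipC v u); lra. Qed.

Definition weak_limit {T : Type} (F : set_system T) (u : T -> V) (c : V) :=
  forall y, (fun t => ip (u t) y : R^o) @ F --> (ip c y : R^o).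

Definition nonexpansive (T : V -> V) := forall x y, `|T x - T y| <= `|x - y|.

Section Continuity.
Context {T : Type} {F : set_system T} {FF : Filter F}.

Lemma ip_cvg_weak_strong (u v : T -> V) (c w : V) (B : R) :
  (\forall t \near F, `|u t| <= B) ->
  weak_limit F u c -> v @ F --> w -> (fun t => ip (u t) (v t) : R^o) @ F --> (ip c w : R^o).
Proof.
move=> uB uc vw.
have -> : (fun t => ip (u t) (v t)) = (fun t => ip (u t) w + ip (u t) (v t - w)).
  by apply/funext => t; rewrite ipBr addrC subrK.
rewrite -[ip c w]addr0; apply: cvgD; first exact: uc.
apply: (cvg0_norm_le (g := fun t => B * `|v t - w|)).
  apply: filterS uB => t ut; apply: le_trans (normr_ip_le _ _) _.
  exact: ler_wpM2r.
by rewrite -(mulr0 B); apply: cvgMl_tmp; apply: cvg_norm_sub0.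
Qed.

Lemma cvg_weak_limit (u : T -> V) (a : V) : u @ F --> a -> weak_limit F u a.
Proof.
move=> ua y; apply/subr_cvg0.
apply: (cvg0_norm_le (g := fun t => `|u t - a| * `|y|)).
  by apply: nearW => t; rewrite -ipBl normr_ip_le.
by rewrite -(mul0r `|y|); apply: cvgMr_tmp; apply: cvg_norm_sub0.
Qed.

Lemma ip_cvg (u v : T -> V) (a b : V) :
  u @ F --> a -> v @ F --> b -> (fun t => ip (u t) (v t) : R^o) @ F --> (ip a b : R^o).
Proof.
move=> ua vb; apply: (@ip_cvg_weak_strong u v a b (`|a| + 1) _ _ vb).
- by apply: (@cvgr_norm_le _ _ _ _ _ u a ua); rewrite ltrDl.
- exact: cvg_weak_limit.
Qed.

End Continuity.

Definition nearest (D : set V) x p := D p /\ forall q, D q -> `|x - p| <= `|x - q|.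

Definition seq_closed (D : set V) := forall (u : nat -> V) (l : V),
  (forall n, D (u n)) -> u @ \oo --> l -> D l.

Lemma closed_seq_closed (D : set V) : closed D -> seq_closed D.
Proof. by move=> cD u l Du ul; apply: (closed_cvg _ cD _ _ ul); apply: nearW. Qed.

Lemma nearest_ip_le0 D x p : convex_set_ D -> nearest D x p ->
  forall q, D q -> ip (x - p) (q - p) <= 0.
Proof.
move=> cD [Dp hp] q Dq.
have key t : 0 < t -> t <= 1 -> 2 * ip (x - p) (q - p) <= t * ip (q - p) (q - p).
  move=> t0 t1; have := hp _ (cD q p t Dq Dp (ltW t0) t1).
  rewrite ler_norm_ip !ipE (ipC q x) (ipC p x) (ipC p q) => h; nra.
set g := ip (x - p) (q - p); set s := ip (q - p) (q - p).
have s0 : 0 <= s by apply: ip_ge0.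
rewrite leNgt; apply/negP => g0.
have gs : 0 < g + s by lra.
(* [key] fails for [t = g / (g + s)] *)
have := key (g / (g + s)); rewrite divr_gt0 // ler_pdivrMr // mul1r => /(_ isT).
have -> : g / (g + s) * s = g * s / (g + s) by rewrite mulrAC.
rewrite ler_pdivlMr // => /(_ ltac:(lra)); rewrite -/g => h; nra.
Qed.

Lemma ip_le0_nearest D x p : D p -> (forall q, D q -> ip (x - p) (q - p) <= 0) ->
  nearest D x p.
Proof.
move=> Dp h; split=> // q Dq; rewrite ler_norm_ip.
have := h q Dq; have := ip_ge0 (q - p).
rewrite !ipE (ipC q x) (ipC p x) (ipC p q); lra.
Qed.

Lemma nearest_uniq D x p1 p2 : convex_set_ D -> nearest D x p1 -> nearest D x p2 -> p1 = p2.
Proof.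
move=> cD h1 h2; have := nearest_ip_le0 cD h1 h2.1; have := nearest_ip_le0 cD h2 h1.1.
move=> a b; apply: ip_subr_eq0; apply/eqP; rewrite eq_le ip_ge0 andbT.
by move: a b; rewrite !ipE ?(ipC p1 x) ?(ipC p2 x) ?(ipC p2 p1); lra.
Qed.

Lemma convex_dist_sqr_le D x d p q : convex_set_ D ->
  (forall r, D r -> d <= `|x - r|) -> 0 <= d -> D p -> D q ->
  ip (p - q) (p - q) <= 2 * `|x - p| ^+ 2 + 2 * `|x - q| ^+ 2 - 4 * d ^+ 2.
Proof.
move=> cD dle d0 Dp Dq.
have := dle _ (cD p q 2^-1 Dp Dq ltac:(lra) ltac:(lra)).
rewrite -(ler_pXn2r (_ : (0 < 2)%N)) ?nnegrE // !ip_normE.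
rewrite !ipE (ipC p x) (ipC q x) (ipC q p); lra.
Qed.

Lemma nearest_exists D x : D !=set0 -> convex_set_ D -> seq_closed D ->
  exists p, nearest D x p.
Proof.
move=> [q0 Dq0] cD sD.
set S := [set r | exists2 q, D q & r = `|x - q|].
have hS : has_inf S.
  by split; [exists `|x - q0|; exists q0 | exists 0 => r [q _ ->]].
set d := inf S.
have d0 : 0 <= d.
  by apply: lb_le_inf; [exists `|x - q0|; exists q0 | move=> r [q _ ->]].
have dle q : D q -> d <= `|x - q|.
  by move=> Dq; apply: ge_inf; [exact: hS.2 | exists q].
have /choice [q hq] n : exists q, D q /\ `|x - q| < d + harmonic n.
  by have [r [q Dq ->] hr] := @inf_adherent _ S _ (harmonic_gt0 n) hS; exists q.
have qsqr n : `|x - q n| ^+ 2 <= d ^+ 2 + (2 * d + 1) * harmonic n.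
  have h1 : harmonic n <= 1 :> R by rewrite /= invf_le1 ?ltr0Sn // ler1n.
  have := harmonic_gt0 n (R := R).
  have : `|x - q n| ^+ 2 <= (d + harmonic n) ^+ 2.
    by rewrite ler_pXn2r ?nnegrE ?addr_ge0 ?harmonic_ge0 // ltW ?(hq n).2.
  nra.
have [l ql] : exists l : V, q @ \oo --> l.
  apply: cauchyn_cvg_ex => e e0.
  have [|N HN] := invSn_lt_eventually (_ : 0 < e ^+ 2 / (4 * (2 * d + 1))).
    by rewrite divr_gt0 ?exprn_gt0 //; lra.
  exists N => m n hm hn; rewrite ltr_norm_sqr ?ltW //.
  have := convex_dist_sqr_le cD dle d0 (hq m).1 (hq n).1.
  have := qsqr m; have := qsqr n; have := HN _ hm; have := HN _ hn.
  have := harmonic_gt0 m (R := R); have := harmonic_gt0 n (R := R); rewrite /=.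
  rewrite !ltr_pdivlMr; [|lra|lra].
  set hn' := (n.+1%:R)^-1; set hm' := (m.+1%:R)^-1; nra.
have Dl : D l by apply: (sD q) => // n; exact: (hq n).1.
exists l; split=> // q' Dq'; apply: le_trans (dle _ Dq').
have xq : (fun n => `|x - q n| : R^o) @ \oo --> (`|x - l| : R^o).
  by apply: cvg_norm; apply: cvgB => //; exact: cvg_cst.
have dh : (fun n => d + harmonic n : R^o) @ \oo --> (d : R^o).
  by rewrite -[X in _ --> X]addr0; apply: cvgD; [exact: cvg_cst | exact: cvg_harmonic].
by apply: (ler_cvg_to xq dh); apply: nearW => n; apply: ltW; exact: (hq n).2.
Qed.

Lemma metric_proj_nearest D x : D !=set0 -> convex_set_ D -> seq_closed D ->
  nearest D x (metric_proj D x).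
Proof.
move=> D0 cD sD; have [p hp] := nearest_exists x D0 cD sD.
exact: (xgetI 0 (P := [set p | D p /\ forall q, D q -> `|x - p| <= `|x - q|]) hp).
Qed.

Lemma metric_proj_firm D u v : convex_set_ D -> nearest D u (metric_proj D u) ->
  nearest D v (metric_proj D v) ->
  ip (metric_proj D u - metric_proj D v) (metric_proj D u - metric_proj D v)
  + ip ((u - metric_proj D u) - (v - metric_proj D v))
       ((u - metric_proj D u) - (v - metric_proj D v))
  <= ip (u - v) (u - v).
Proof.
move=> cD hu hv.
have := nearest_ip_le0 cD hu hv.1; have := nearest_ip_le0 cD hv hu.1.
set pu := metric_proj D u; set pv := metric_proj D v.
rewrite !ipE (ipC pu u) (ipC pv u) (ipC pu v) (ipC pv v) (ipC v u) (ipC pv pu).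
lra.
Qed.

Lemma riesz_representation (L : V -> R) B :
  (forall y1 y2, L (y1 + y2) = L y1 + L y2) -> (forall r y, L (r *: y) = r * L y) ->
  (forall y, `|L y| <= B * `|y|) -> exists c, forall y, L y = ip c y.
Proof.
move=> LD LZ LB.
have L0 : L 0 = 0 by rewrite -(scale0r 0) LZ mul0r.
have LN y : L (- y) = - L y by rewrite -scaleN1r LZ mulN1r.
have LBB y1 y2 : L (y1 - y2) = L y1 - L y2 by rewrite LD LN.
have [[w Lw]|] := pselect (exists w, L w <> 0); last first.
  move=> h; exists 0 => y; rewrite ip0l.
  by apply: contrapT => hy; apply: h; exists y.
set K := [set v | L v = 0].
have K0 : K !=set0 by exists 0.
have cK : convex_set_ K.
  by move=> a b t; rewrite /K /= => Ka Kb _ _; rewrite LD !LZ Ka Kb !mulr0 addr0.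
have sK : seq_closed K.
  move=> u l Ku /cvgnPdist_lt ul; rewrite /K /=.
  apply/eqP; rewrite -normr_eq0; apply/eqP/le_anti; rewrite normr_ge0 andbT.
  apply/ler_addgt0Pr => e e0; rewrite add0r.
  have B1 : 0 < `|B| + 1 by have := normr_ge0 B; lra.
  have [N HN] := ul (e / (`|B| + 1)) (divr_gt0 e0 B1).
  have := HN N (leqnn N); rewrite ltr_pdivlMr // => h1.
  have := LB (l - u N); rewrite LBB Ku subr0 => h2.
  have h3 : B * `|l - u N| <= `|B| * `|l - u N| by rewrite ler_wpM2r // ler_norm.
  have := normr_ge0 B; have := normr_ge0 (l - u N); nra.
(* [u] spans the orthogonal complement of the kernel *)
have hp := metric_proj_nearest w K0 cK sK.
set u := w - metric_proj K w.
have KP : K (metric_proj K w) := hp.1.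
have Lu : L u = L w by rewrite LBB KP subr0.
have orth k : K k -> ip u k = 0.
  move=> Kk; apply/le_anti/andP; split.
    have := nearest_ip_le0 cK hp (_ : K (k + metric_proj K w)); rewrite addrK; apply.
    by rewrite /K /= LD Kk KP addr0.
  have := nearest_ip_le0 cK hp (_ : K (- k + metric_proj K w)).
  rewrite addrK ipNr oppr_le0; apply.
  by rewrite /K /= LD LN Kk KP oppr0 addr0.
have uu : ip u u != 0 by apply/negP => /eqP /ip_eq0 u0; apply: Lw; rewrite -Lu u0.
exists ((L u / ip u u) *: u) => y.
have Ky : K (y - (L y / L u) *: u).
  by rewrite /K /= LBB LZ Lu divfK ?subrr //; apply/eqP.
have := orth _ Ky; rewrite ipBr ipZr ipZl => /eqP; rewrite subr_eq0 => /eqP ->.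
by rewrite Lu; field; apply/andP; split => //; exact/eqP.
Qed.

Section UltraWeakLimit.
Context (U : set_system nat) {UU : UltraFilter U}.
Hypothesis U_oo : (\oo : set_system nat) `<=` U.
Variables (u : nat -> V) (B : R).
Hypothesis uB : forall k, `|u k| <= B.


Lemma cvg_oo_ultra {W : topologicalType} (a : nat -> W) (l : W) :
  a @ \oo --> l -> a @ U --> l.
Proof. by move=> al A /al; exact: U_oo. Qed.

Lemma ultra_weak_limit : exists c, weak_limit U u c.
Proof.
have bnd y k : `|ip (u k) y| <= B * `|y|.
  by apply: le_trans (normr_ip_le _ _) _; apply: ler_wpM2r.
have /choice [L hL] y : exists l : R^o, (fun k => ip (u k) y : R^o) @ U --> l.
  exact: ultra_bounded_cvg (bnd y).
have [c hc] : exists c, forall y, L y = ip c y.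
  apply: (riesz_representation (B := B)) => [y1 y2|r y|y].
  - apply: (cvg_unique (@norm_hausdorff R R^o) (hL (y1 + y2))).
    have -> : (fun k => ip (u k) (y1 + y2) : R^o) = (fun k => ip (u k) y1 + ip (u k) y2).
      by apply/funext => k; rewrite ipDr.
    exact: cvgD.
  - apply: (cvg_unique (@norm_hausdorff R R^o) (hL (r *: y))).
    have -> : (fun k => ip (u k) (r *: y) : R^o) = (fun k => r * ip (u k) y).
      by apply/funext => k; rewrite ipZr.
    exact: cvgMl_tmp.
  - apply: (ler_cvg_to (cvg_norm (hL y)) (cvg_cst (B * `|y| : R^o))).
    exact: nearW.
by exists c => y; rewrite -hc.
Qed.

Lemma ultra_weak_limit_fixed (T : V -> V) c : nonexpansive T ->
  (fun k => u k - T (u k)) @ \oo --> 0 -> weak_limit U u c -> T c = c.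
Proof.
move=> Tne reg uc; set w := c - T c.
set r := fun k => `|u k - T (u k)|.
set K := B + `|c|.
have lim_w : (fun k => ip w w + 2 * (ip (u k) w - ip c w) : R^o) @ U --> (ip w w : R^o).
  rewrite -[X in _ --> X]addr0 -[X in _ + X](mulr0 2) -(subrr (ip c w)).
  by apply: cvgD; [exact: cvg_cst | apply: cvgMl_tmp; apply: cvgB; [|exact: cvg_cst]].
have lim_r : (fun k => r k * (r k + 2 * K) : R^o) @ U --> (0 : R^o).
  have r0 : (r : nat -> R^o) @ U --> (0 : R^o).
    by apply: cvg_oo_ultra; have := cvg_norm reg; rewrite normr0; apply; exact _.
  rewrite -(mul0r (0 + 2 * K)); apply: cvgM => //.
  by apply: cvgD => //; exact: cvg_cst.
suff : ip w w <= 0.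
  by move=> w0; apply/esym/ip_subr_eq0/le_anti; rewrite w0 ip_ge0.
apply: (ler_cvg_to lim_w lim_r); apply: nearW => k.
(* compare [|u k - T c|] expanded around [c] with the triangle inequality through [T (u k)] *)
have tri : `|u k - T c| <= r k + `|u k - c|.
  have -> : u k - T c = (u k - T (u k)) + (T (u k) - T c) by rewrite addrA subrK.
  by apply: le_trans (ler_normD _ _) _; rewrite lerD2l Tne.
have nK : `|u k - c| <= K by apply: le_trans (ler_normB _ _) _; rewrite lerD2r uB.
have r0 : 0 <= r k by exact: normr_ge0.
have := tri; rewrite ler_norm_sqr ?addr_ge0 //.
have -> : u k - T c = (u k - c) + w by rewrite /w addrA subrK.
set a := u k - c in nK *.
have -> : ip (u k) w - ip c w = ip a w by rewrite ipBl.
rewrite ip_sqrD -ip_normE; have := normr_ge0 a; nra.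
Qed.

Lemma ultra_weak_limit_nearest (S : set V) (z : nat -> V) zs c :
  convex_set_ S -> (forall k, nearest S (u k) (z k)) -> z @ \oo --> zs -> S c ->
  weak_limit U u c -> c = zs.
Proof.
move=> cS zS zzs Sc uc; apply: ip_subr_eq0; apply/le_anti; rewrite ip_ge0 andbT.
have czs : (fun k => c - z k) @ U --> c - zs.
  by apply: cvgB; [exact: cvg_cst | exact: cvg_oo_ultra].
have lim : (fun k => ip (u k) (c - z k) - ip (z k) (c - z k) : R^o) @ U -->
    (ip c (c - zs) - ip zs (c - zs) : R^o).
  apply: cvgB; first by apply: (ip_cvg_weak_strong (B := B) _ uc czs); exact: nearW.
  by apply: ip_cvg => //; exact: cvg_oo_ultra.
rewrite ipBl; apply: (ler_cvg_to lim (cvg_cst (0 : R^o))); apply: nearW => k.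
by rewrite -ipBl; apply: nearest_ip_le0 cS (zS k) c Sc.
Qed.

End UltraWeakLimit.

(* With [K = a / (1 - a)] this is the usual characterisation of [a]-averaged maps. *)
Definition averaged (T : V -> V) := exists2 K, 0 < K & forall x y,
  ip ((x - T x) - (y - T y)) ((x - T x) - (y - T y))
  <= K * (ip (x - y) (x - y) - ip (T x - T y) (T x - T y)).

Lemma averaged_nonexpansive T : averaged T -> nonexpansive T.
Proof.
move=> [K K0 hK] x y; rewrite ler_norm_ip.
have := hK x y; have := ip_ge0 ((x - T x) - (y - T y)); nra.
Qed.

Lemma nonexpansive_fix_convex T : nonexpansive T -> convex_set_ [set p | T p = p].
Proof.
move=> Tne p q t /= Tp Tq t0 t1; set m := t *: p + (1 - t) *: q; set w := T m.
have hp : ip (w - p) (w - p) <= ip (m - p) (m - p) by rewrite -ler_norm_ip -{1}Tp Tne.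
have hq : ip (w - q) (w - q) <= ip (m - q) (m - q) by rewrite -ler_norm_ip -{1}Tq Tne.
have e : t * ip (w - p) (w - p) + (1 - t) * ip (w - q) (w - q) =
  ip (w - m) (w - m) + t * ip (m - p) (m - p) + (1 - t) * ip (m - q) (m - q).
  rewrite /m !ipE ?(ipC p w, ipC q w, ipC q p); ring.
have := ler_wpM2l t0 hp; have := ler_wpM2l (_ : 0 <= 1 - t) hq.
move=> /(_ ltac:(lra)) h2 h1.
apply: ip_subr_eq0; apply/le_anti; rewrite ip_ge0 andbT; lra.
Qed.

Lemma nonexpansive_fix_seq_closed T : nonexpansive T -> seq_closed [set p | T p = p].
Proof.
move=> Tne u l Tu /cvgnPdist_lt ul /=.
apply/eqP; rewrite -subr_eq0 -normr_eq0; apply/eqP/le_anti.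
rewrite normr_ge0 andbT; apply/ler_addgt0Pr => e e0; rewrite add0r.
have [n hn] := ul (e / 2) ltac:(lra); have := hn n (leqnn n).
have -> : T l - l = (T l - T (u n)) + (u n - l) by rewrite Tu addrA subrK.
move=> hn'; apply: le_trans (ler_normD _ _) _.
have := Tne l (u n); rewrite (distrC (u n)); lra.
Qed.

Section ForwardBackward.
Variables (C : set V) (f : V -> V) (lam alpha : R).
Hypotheses (C0 : C !=set0) (cC : convex_set_ C) (sC : seq_closed C)
  (lam0 : 0 < lam) (lam_lt : lam < 2 * alpha)
  (fism : inverse_strongly_monotone ip alpha f).

Let T x := metric_proj C (x - lam *: f x).

Let T_nearest x : nearest C (x - lam *: f x) (T x).
Proof. exact: metric_proj_nearest. Qed.

Lemma forward_backward_firm x y :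
  ip (T x - T y) (T x - T y)
  + ip ((x - lam *: f x - T x) - (y - lam *: f y - T y))
       ((x - lam *: f x - T x) - (y - lam *: f y - T y))
  + lam * (2 * alpha - lam) * ip (f x - f y) (f x - f y)
  <= ip (x - y) (x - y).
Proof.
have := metric_proj_firm cC (T_nearest x) (T_nearest y).
have := ler_wpM2l (ltW lam0) (fism x y); rewrite ip_normE -/(T x) -/(T y).
set a := (x - lam *: f x - T x) - (y - lam *: f y - T y).
set A := ip a a; set B := ip (T x - T y) (T x - T y).
rewrite !ipE (ipC (f y) (f x)) (ipC (f x) x) (ipC (f y) x) (ipC (f x) y)
  (ipC (f y) y) (ipC y x).
nra.
Qed.

Lemma forward_backward_averaged : averaged T.
Proof.
have d0 : 0 < 2 * alpha - lam by rewrite subr_gt0.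
exists (2 + 2 * lam / (2 * alpha - lam)).
  have : 0 < 2 * lam / (2 * alpha - lam) by rewrite divr_gt0 ?mulr_gt0.
  lra.
move=> x y; have hm := forward_backward_firm x y.
set a := (x - lam *: f x - T x) - (y - lam *: f y - T y).
set b := lam *: (f x - f y).
have -> : (x - T x) - (y - T y) = a + b.
  by rewrite /a /b scalerBr [in RHS](addrAC x) [in RHS](addrAC y) [in RHS]opprD
    opprK addrACA subrK addrK.
have hp := ip_parallelogram_le a b.
have hb : ip b b = lam ^+ 2 * ip (f x - f y) (f x - f y) by rewrite /b !ipZl !ipZr; ring.
move: hm hp; rewrite hb.
set A := ip a a; set F := ip (f x - f y) (f x - f y).
set X := ip (x - y) (x - y); set Y := ip (T x - T y) (T x - T y).
move=> hm hp.
have F0 : 0 <= F by apply: ip_ge0.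
have A0 : 0 <= A by apply: ip_ge0.
have -> : 2 + 2 * lam / (2 * alpha - lam) =
    (2 * (2 * alpha - lam) + 2 * lam) / (2 * alpha - lam) by field; lra.
rewrite mulrAC ler_pdivlMr //.
have l0 := ltW lam0.
have := ler_wpM2r (ltW d0) hp.
have := ler_wpM2l (_ : 0 <= 2 * (2 * alpha - lam) + 2 * lam) hm.
move=> /(_ ltac:(lra)) h3 h1.
have : 0 <= lam * A by apply: mulr_ge0.
have : 0 <= lam * (2 * alpha - lam) ^+ 2 * F by apply: mulr_ge0 => //; apply: mulr_ge0 => //; exact: sqr_ge0.
nra.
Qed.

Lemma forward_backward_fixE p : SOL ip C f p <-> T p = p.
Proof.
have e : p - lam *: f p - p = - (lam *: f p) by rewrite addrC addKr.
split.
  move=> [Cp hp]; apply: (nearest_uniq cC (T_nearest p)); apply: ip_le0_nearest => // q Cq.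
  by rewrite e ipNl ipZl oppr_le0; exact: mulr_ge0 (ltW lam0) (hp q Cq).
move=> Tp; have Cp : C p by rewrite -Tp; exact: (T_nearest p).1.
split=> // q Cq; have := nearest_ip_le0 cC (T_nearest p) Cq.
by rewrite Tp e ipNl ipZl oppr_le0 pmulr_rge0.
Qed.

End ForwardBackward.

Section AveragedFamily.
Variables (I : finType) (T : I -> V -> V).
Hypothesis T_avg : forall i, averaged (T i).

Definition common_fix := [set p | forall i, T i p = p].

Let comp (s : seq I) x := foldr (fun i acc => T i acc) x s.

Let T_ne i : nonexpansive (T i) := averaged_nonexpansive (T_avg i).

Lemma comp_nonexpansive s : nonexpansive (comp s).
Proof. by elim: s => [|j s IH] x y //=; apply: le_trans (T_ne _ _ _) (IH _ _). Qed.

Lemma comp_fix s p : common_fix p -> comp s p = p.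
Proof. by move=> hp; elim: s => [|j s IH] //=; rewrite IH hp. Qed.

Lemma comp_residual_le s : exists2 A, 0 <= A & forall x p, common_fix p ->
  let gap := ip (x - p) (x - p) - ip (comp s x - p) (comp s x - p) in
  ip (x - comp s x) (x - comp s x) <= A * gap /\
  forall i, i \in s -> ip (x - T i x) (x - T i x) <= A * gap.
Proof.
elim: s => [|j s [A A0 IH]].
  by exists 0 => // x p _ /=; rewrite subrr ip0l mul0r; split.
have [K K0 hK] := T_avg j.
exists (6 * A + 4 * K) => [|x p hp]; first lra.
have [IH1 IH2] := IH x p hp; set y := comp s x.
change (comp (j :: s) x) with (T j y).
have := hK y p; rewrite hp subrr subr0.
set X := ip (x - p) (x - p); set Y := ip (y - p) (y - p).
set Z := ip (T j y - p) (T j y - p) => hy.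
have XY : Y <= X by rewrite -ler_norm_ip -{1}(comp_fix s hp) comp_nonexpansive.
have YZ : Z <= Y by rewrite -ler_norm_ip -{1}(hp j) T_ne.
move: IH1 IH2; rewrite -/y -/X -/Y => IH1 IH2.
set a := ip (x - y) (x - y) in IH1 *; set b := ip (y - T j y) (y - T j y) in hy *.
have a0 : 0 <= a by apply: ip_ge0.
have b0 : 0 <= b by apply: ip_ge0.
have hA1 : A * (X - Y) <= A * (X - Z) by apply: ler_wpM2l => //; lra.
have hK1 : K * (Y - Z) <= K * (X - Z) by apply: ler_wpM2l; lra.
have hA2 : 0 <= A * (X - Y) by apply: mulr_ge0 => //; lra.
have ab := ip_parallelogram_le (x - y) (y - T j y); rewrite addrA subrK -/a -/b in ab.
split; first lra.
move=> i; rewrite in_cons => /orP [/eqP -> | ins]; last by have := IH2 i ins; lra.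
have -> : x - T j x = (x - T j y) + (T j y - T j x) by rewrite addrA subrK.
have := ip_parallelogram_le (x - T j y) (T j y - T j x).
have : ip (T j y - T j x) (T j y - T j x) <= a.
  by rewrite /a -ler_norm_ip distrC T_ne.
lra.
Qed.

Lemma common_fix_convex : convex_set_ common_fix.
Proof.
move=> p q t hp hq t0 t1 i.
exact: (nonexpansive_fix_convex (T_ne i)) (hp i) (hq i) t0 t1.
Qed.

Lemma common_fix_seq_closed : seq_closed common_fix.
Proof. by move=> u l hu ul i; exact: (nonexpansive_fix_seq_closed (T_ne i) (hu^~ i) ul). Qed.

Section Iterates.
Variables (x0 p0 : V).
Hypothesis Fp0 : common_fix p0.

Let xk k := iter k (comp (enum I)) x0.
Let z k := metric_proj common_fix (xk k).

Lemma iter_fejer p k m : common_fix p -> (k <= m)%N -> `|xk m - p| <= `|xk k - p|.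
Proof.
move=> hp /subnK <-; elim: (m - k)%N => [|n IH] //=.
rewrite -{1}(comp_fix (enum I) hp).
exact: le_trans (comp_nonexpansive _ _ _) IH.
Qed.

Lemma iter_bounded k : `|xk k| <= `|x0 - p0| + `|p0|.
Proof.
have := iter_fejer Fp0 (leq0n k); rewrite [xk 0]/= => h.
by rewrite -[xk k](subrK p0); apply: le_trans (ler_normD _ _) _; rewrite lerD2r.
Qed.

Lemma iter_asymptotically_regular i : (fun k => xk k - T i (xk k)) @ \oo --> 0.
Proof.
apply/cvgnPdist_lt => e e0.
have [A A0 hA] := comp_residual_le (enum I).
set d := fun k => ip (xk k - p0) (xk k - p0).
have dS k : d k.+1 <= d k by rewrite /d -ler_norm_ip; apply: iter_fejer.
have eA : 0 < e ^+ 2 / (A + 1) by apply: divr_gt0; [apply: exprn_gt0 | lra].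
have [M HM] := nonincreasing_ge0_cauchy (fun k => ip_ge0 _) dS eA.
exists M => k hk; rewrite sub0r normrN ltr_norm_sqr ?ltW //.
have := (hA (xk k) p0 Fp0).2 i (mem_enum _ i).
have := HM k k.+1 hk (leqnSn k); rewrite /d /xk iterS -/(xk k).
set D := ip (xk k - p0) (xk k - p0) - _; rewrite ltr_pdivlMr; last lra.
have : 0 <= D by rewrite /D subr_ge0 -ler_norm_ip; exact: (iter_fejer Fp0 (leqnSn k)).
have : 0 < e ^+ 2 by apply: exprn_gt0.
nra.
Qed.

Let z_nearest k : nearest common_fix (xk k) (z k).
Proof.
exact: metric_proj_nearest (ex_intro _ p0 Fp0) common_fix_convex common_fix_seq_closed.
Qed.

Lemma proj_iter_sqr_le k m : (k <= m)%N ->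
  ip (z m - z k) (z m - z k) <= ip (xk k - z k) (xk k - z k) - ip (xk m - z m) (xk m - z m).
Proof.
move=> km; have := nearest_ip_le0 common_fix_convex (z_nearest m) (z_nearest k).1.
have := iter_fejer (z_nearest k).1 km; rewrite ler_norm_ip.
rewrite !ipE ?(ipC (z m) (xk m), ipC (z k) (xk m), ipC (z k) (z m)); lra.
Qed.

Lemma proj_iter_cvg : exists2 zs, common_fix zs & z @ \oo --> zs.
Proof.
set e := fun k => ip (xk k - z k) (xk k - z k).
have [zs hzs] : exists zs : V, z @ \oo --> zs.
  apply: cauchyn_cvg_ex => eps eps0.
  have eS k : e k.+1 <= e k.
    have := proj_iter_sqr_le (leqnSn k); have := ip_ge0 (z k.+1 - z k); rewrite /e; lra.
  have [M HM] := nonincreasing_ge0_cauchy (fun k => ip_ge0 _) eS (exprn_gt0 2 eps0).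
  exists M => m n hm hn; rewrite ltr_norm_sqr ?ltW //.
  have [mn|nm] := leqP m n.
    rewrite -opprB ipNl ipNr opprK.
    by have := proj_iter_sqr_le mn; have := HM m n hm mn; rewrite /e; lra.
  by have := proj_iter_sqr_le (ltnW nm); have := HM n m hn (ltnW nm); rewrite /e; lra.
by exists zs => //; apply: (common_fix_seq_closed (u := z)) hzs => k; exact: (z_nearest k).1.
Qed.

(* Every ultrafilter refining [\oo] sends the bounded sequence [xk] to a weak limit,
   which is a common fixed point by demiclosedness and then equals [zs]. *)
Lemma iter_weak_cvg zs : common_fix zs -> z @ \oo --> zs -> weak_limit \oo xk zs.
Proof.
move=> Fzs zzs y; apply: cvg_ultra => U UU U_oo.
have [c hc] := ultra_weak_limit (U := U) iter_bounded.
have Fc : common_fix c.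
  by move=> i; apply: (ultra_weak_limit_fixed U_oo iter_bounded (T_ne i)) hc;
    exact: iter_asymptotically_regular.
by rewrite -(ultra_weak_limit_nearest U_oo iter_bounded common_fix_convex z_nearest zzs Fc hc).
Qed.

End Iterates.
End AveragedFamily.
End InnerProduct.

Theorem theorem4p2 (R : realType) (V : completeNormedModType R)
  (ip : V -> V -> R) (N : nat) (f : 'I_N -> V -> V) (alpha : 'I_N -> R)
  (C : 'I_N -> set V) (lam : R) (x0 : V) :
  inner_product ip ->
  (0 < N)%N ->
  (forall i, 0 < alpha i) ->
  (forall i, inverse_strongly_monotone ip (alpha i) (f i)) ->
  (forall i, C i !=set0 /\ closed (C i) /\ convex_set_ (C i)) ->
  [set x | forall i, C i x] !=set0 ->
  [set x | forall i, SOL ip (C i) (f i) x] !=set0 ->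
  0 < lam -> (forall i, lam < 2 * alpha i) ->
  let Psi := [set x | forall i, SOL ip (C i) (f i) x] in
  let T := fun i x => metric_proj (C i) (x - lam *: f i x) in
  let Tcomp := fun x => foldr (fun i acc => T i acc) x (enum 'I_N) in
  let xk := fun k : nat => iter k Tcomp x0 in
  exists2 xs, Psi xs &
    (forall y, (fun k => ip (xk k) y : R^o) @ \oo --> (ip xs y : R^o)) /\
    (fun k => metric_proj Psi (xk k)) @ \oo --> xs.
Proof.
move=> hip _ _ fism hC _ [p0 Pp0] lam0 lam_lt Psi T Tcomp xk.
have hC0 i := (hC i).1.
have hcvx i := (hC i).2.2.
have hcl i := closed_seq_closed (hC i).2.1.
have T_avg i : averaged ip (T i).
  exact: (forward_backward_averaged hip (hC0 i) (hcvx i) (hcl i) lam0 (lam_lt i) (fism i)).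
have PsiE : Psi = common_fix T.
  apply/seteqP; split=> p hp i;
    by apply/(forward_backward_fixE hip (f i) (hC0 i) (hcvx i) (hcl i) lam0); apply: hp.
have Fp0 : common_fix T p0 by rewrite -PsiE.
have [xs Fxs zxs] := proj_iter_cvg hip T_avg x0 Fp0.
rewrite PsiE.
by exists xs => //; split => //; exact: (iter_weak_cvg hip T_avg Fp0 Fxs zxs).
Qed.
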